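(* For the odd-cycle index coding problem, $\limsup_{\epsilon\to0}R^m_{lb}(\mathbf{0}+\epsilon\mathbf{1})<\frac m2$.
   Context: Odd-cycle index coding problem: $m\ge5$ odd; source $\mathbf{X}=(X_1,\dots,X_m)$ of i.i.d. Bernoulli$(1/2)$ bits; decoder $i\in[m]$ has side information $\mathbf{Y_i}=(X_{i-1},X_{i+1})$ (indices mod $m$, taken in $[m]$) and wants $X_i$; it is cast as a rate-distortion problem with distortion $d_i(\mathbf{x},\hat x_i)=\mathbf{1}\{\hat x_i\ne x_i\}$ and target $D_i=0$; rates in bits. $R^m_{lb}(\mathbf{D}+\epsilon\mathbf{1})=\sup_{\bar P}\inf_{\bar C}\bar R_{lb}-\epsilon$, where $\bar R_{lb}=\max_\sigma[I(\mathbf{X};V,U_{Y_{\sigma(1)}}|\mathbf{Y}_{\sigma(1)})+\sum_{k=2}^mI(\mathbf{X};U_{Y_{\sigma(k)}}|V,U_{Y_{\sigma(1)}},\dots,U_{Y_{\sigma(k-1)}},\mathbf{Y}_{\sigma(1)},\dots,\mathbf{Y}_{\sigma(k)})]$ over permutations $\sigma$ of $[m]$; $\bar P$ is the set of joint laws of $(\mathbf{X},\mathbf{Y_1},\dots,\mathbf{Y_m})$ with the given pairwise marginals of $(\mathbf{X},\mathbf{Y_i})$; $\bar C$ is the set of $(V,U_{Y_1},\dots,U_{Y_m})$ with $(\mathbf{Y_1},\dots,\mathbf{Y_m})\leftrightarrow\mathbf{X}\leftrightarrow(V,U_{Y_1},\dots,U_{Y_m})$ and functions $g_i$ with $E[d_i(\mathbf{X},g_i(V,U_{Y_i},\mathbf{Y_i}))]\le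 D_i+\epsilon$. *)

From Stdlib Require Import Reals.
From mathcomp Require Import all_fingroup.
From mathcomp Require Import all_boot.
Set Implicit Arguments.
Unset Strict Implicit.
Unset Printing Implicit Defensive.
Local Open Scope R_scope.

Definition rsum (T : finType) (F : T -> R) : R := \big[Rplus/R0]_(t : T) F t.
Definition rsumP (T : finType) (P : pred T) (F : T -> R) : R :=
  \big[Rplus/R0]_(t : T | P t) F t.

(* logarithm in base 2 (rates in bits); ln x = 0 for x <= 0 in Stdlib, so
   0 * log2 0 = 0 as usual *)
Definition log2 (x : R) : R := (ln x / ln 2).

Definition is_pmf (T : finType) (p : T -> R) : Prop :=
  (forall t, 0 <= p t) /\ rsum p = 1.

Definition dist_of (Om : finType) (p : Om -> R) (A : finType) (f : Om -> A) (a : A) : R :=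
  rsumP (fun w => f w == a) p.

Definition entropy (Om : finType) (p : Om -> R) (A : finType) (f : Om -> A) : R :=
  (- rsum (fun a : A => dist_of p f a * log2 (dist_of p f a))).

Definition cond_mi (Om : finType) (p : Om -> R) (A B C : finType)
  (fa : Om -> A) (fb : Om -> B) (fc : Om -> C) : R :=
  (entropy p (fun w => (fa w, fc w)) + entropy p (fun w => (fb w, fc w))
   - entropy p (fun w => (fa w, fb w, fc w)) - entropy p fc).

Lemma ord_pos (m : nat) (i : 'I_m) : (0 < m)%N.
Proof. exact: (leq_ltn_trans (leq0n i) (ltn_ord i)). Qed.

Definition cyc_add (m : nat) (i : 'I_m) (d : nat) : 'I_m :=
  Ordinal (ltn_pmod (i + d)%N (ord_pos i)).
Definition prev (m : nat) (i : 'I_m) : 'I_m := cyc_add i (m - 1)%N.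
Definition next (m : nat) (i : 'I_m) : 'I_m := cyc_add i 1.

(* source X = (X_1..X_m); side informations Y_i = (X_{i-1}, X_{i+1}) *)
Notation Xs m := {ffun 'I_m -> bool}.
Notation Ys m := {ffun 'I_m -> (bool * bool)%type}.
Notation Us m TU := {ffun 'I_m -> TU}.
(* sample space of (X, Y_1..Y_m, V, U_{Y_1}..U_{Y_m}) *)
Notation Omega m TV TU := ((Xs m * Ys m) * (TV * Us m TU))%type.

(* P-bar: joint laws of (X, Y_1..Y_m) whose (X, Y_i) marginals are the given
   ones: X uniform on {0,1}^m and Y_i = (X_{i-1}, X_{i+1}). *)
Definition in_Pbar (m : nat) (P : Xs m * Ys m -> R) : Prop :=
  is_pmf P /\
  forall (i : 'I_m) (x : Xs m) (yi : bool * bool),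
    rsumP (fun xy : Xs m * Ys m => (xy.1 == x) && (xy.2 i == yi)) P =
    (if yi == (x (prev i), x (next i)) then / (2 ^ m) else 0).

(* Joint law of (X, Y, V, U) when (Y) <-> X <-> (V, U): p = P(x,y) Q(v,u | x) *)
Definition joint (m : nat) (TV TU : finType) (P : Xs m * Ys m -> R)
  (Q : Xs m -> TV * Us m TU -> R) (w : Omega m TV TU) : R :=
  (P w.1 * Q w.1.1 w.2).

(* C-bar(eps): test channels Q (realising the Markov chain) and decoders g_i
   with E[ d_i(X, g_i(V, U_{Y_i}, Y_i)) ] <= D_i + eps, where D_i = 0 and
   d_i is the Hamming distortion on X_i. *)
Definition in_Cbar (m : nat) (TV TU : finType) (P : Xs m * Ys m -> R) (eps : R)
  (Q : Xs m -> TV * Us m TU -> R) (g : 'I_m -> TV -> TU -> bool * bool -> bool) : Prop :=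
  (forall x, is_pmf (Q x)) /\
  forall i : 'I_m,
    (rsum (fun w : Omega m TV TU =>
       joint P Q w * (if g i w.2.1 (w.2.2 i) (w.1.2 i) != w.1.1 i then 1 else 0))
     <= 0 + eps).

(* k-th summand (k = 0 is the first one) of the bound for permutation s *)
Definition Rlb_term (m : nat) (TV TU : finType) (P : Xs m * Ys m -> R)
  (Q : Xs m -> TV * Us m TU -> R) (s : {perm 'I_m}) (k : 'I_m) : R :=
  let p := joint P Q in
  if (val k == 0)%N then
    cond_mi p (fun w : Omega m TV TU => w.1.1)
              (fun w => (w.2.1, w.2.2 (s k)))
              (fun w => w.1.2 (s k))
  else
    cond_mi p (fun w : Omega m TV TU => w.1.1)
              (fun w => w.2.2 (s k))
              (fun w => (w.2.1,
                         [ffun j : 'I_m => if (j < k)%N then Some (w.2.2 (s j)) else None],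
                         [ffun j : 'I_m => if (j <= k)%N then Some (w.1.2 (s j)) else None])).

(* R-bar_lb: maximum over permutations s of [m] (all sums are >= 0, so the
   max with initial value 0 is the max over the nonempty set of permutations) *)
Definition Rbar_lb (m : nat) (TV TU : finType) (P : Xs m * Ys m -> R)
  (Q : Xs m -> TV * Us m TU -> R) : R :=
  \big[Rmax/R0]_(s : {perm 'I_m}) rsum (fun k : 'I_m => Rlb_term P Q s k).

(* R^m_lb(0 + eps 1) <= c, i.e.  sup_{P in Pbar} inf_{C in Cbar} Rbar_lb - eps <= c *)
Definition Rlb_le (m : nat) (eps c : R) : Prop :=
  forall P : Xs m * Ys m -> R, in_Pbar P ->
  forall eta : R, (0 < eta) ->
  exists (TV TU : finType) (Q : Xs m -> TV * Us m TU -> R)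
         (g : 'I_m -> TV -> TU -> bool * bool -> bool),
    in_Cbar P eps Q g /\ (Rbar_lb P Q - eps <= c + eta).

(* Use the test channel with trivial [V] and [U_{Y_i} = X_i], which every
   decoder recovers without error.  For a decoding order [s], the [k]-th summand
   of [Rbar_lb] is then the conditional entropy of a single bit, hence at most 1,
   and it vanishes as soon as an earlier side information [Y_(s j)] contains
   [X_(s k)], i.e. [s j] is a neighbour of [s k] on the cycle.  Mapping each
   remaining ("fresh") position to the position of the successor of its vertex
   injects the fresh positions into the others, so for odd [m] there are at most
   [(m - 1) / 2] of them: [R^m_lb(0 + eps 1) <= (m - 1) / 2 < m / 2] for all
   [eps > 0]. *)

From Pilot Require Import Defs.
From Stdlib Require Import Reals Lra.
From HB Require Import structures.
From mathcomp Require Import all_fingroup.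
From mathcomp Require Import all_boot.
Set Implicit Arguments.
Unset Strict Implicit.
Unset Printing Implicit Defensive.
Local Open Scope R_scope.

HB.instance Definition _ := Monoid.isComLaw.Build R R0 Rplus
  (fun x y z => esym (Rplus_assoc x y z)) Rplus_comm Rplus_0_l.
HB.instance Definition _ := Monoid.isMulLaw.Build R R0 Rmult Rmult_0_l Rmult_0_r.
HB.instance Definition _ := Monoid.isAddLaw.Build R Rmult Rplus
  Rmult_plus_distr_r Rmult_plus_distr_l.

Section FiniteSums.
Variable T : finType.

Lemma rsum_le (F G : T -> R) : (forall t, F t <= G t) -> rsum F <= rsum G.
Proof. by move=> FG; apply: (big_ind2 Rle) => // *; lra. Qed.

Lemma rsumD (F G : T -> R) : rsum (fun t => F t + G t) = rsum F + rsum G.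
Proof. exact: big_split. Qed.

Lemma rsumB (F G : T -> R) : rsum (fun t => F t - G t) = rsum F - rsum G.
Proof.
rewrite /rsum (eq_bigr (fun t => F t + - G t)) // big_split /=.
by rewrite -(big_morph Ropp Ropp_plus_distr (Ropp_0 : - R0 = R0)).
Qed.

Lemma rsumMl (c : R) (F : T -> R) : rsum (fun t => c * F t) = c * rsum F.
Proof. by rewrite /rsum big_distrr. Qed.

Lemma rsumMr (c : R) (F : T -> R) : rsum (fun t => F t * c) = rsum F * c.
Proof. by rewrite /rsum big_distrl. Qed.

Lemma rsumPE (P : pred T) (F : T -> R) :
  rsumP P F = rsum (fun t => if P t then F t else 0).
Proof. exact: big_mkcond. Qed.

Lemma rsum_ge_term (F : T -> R) t : (forall t, 0 <= F t) -> F t <= rsum F.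
Proof.
move=> F_ge0; rewrite /rsum (bigD1 t) //=.
suff : 0 <= \big[Rplus/R0]_(i | i != t) F i by lra.
by apply: (big_ind (Rle 0)) => // *; lra.
Qed.

Lemma rsum_ge0 (F : T -> R) : (forall t, 0 <= F t) -> 0 <= rsum F.
Proof. by move=> F_ge0; apply: (big_ind (Rle 0)) => // *; lra. Qed.

Lemma rsumP1 (A : pred T) : rsumP A (fun _ => 1) = INR #|A|.
Proof.
by rewrite /rsumP -sum1_card (big_morph INR plus_INR (erefl (INR 0))).
Qed.

End FiniteSums.

Lemma log2_diff_le (n a b : R) : 0 < n -> 0 < a -> 0 < b ->
  log2 b - log2 a <= log2 n + (b / a / n - 1) / ln 2.
Proof.
move=> n0 a0 b0.
have ln2_gt0 : 0 < ln 2 by have := ln_lt_2; lra.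
set r := b / a / n.
have r0 : 0 < r by rewrite /r /Rdiv; repeat apply: Rmult_lt_0_compat => //; apply: Rinv_0_lt_compat.
have -> : b = n * a * r by rewrite /r; field; lra.
have ln_r : ln r <= r - 1 by have := exp_ineq1_le (ln r); rewrite exp_ln //; lra.
clearbody r.
have -> : log2 (n * a * r) - log2 a = log2 n + ln r / ln 2.
  have na0 : 0 < n * a by apply: Rmult_lt_0_compat.
  by rewrite /log2 ln_mult // ln_mult //; field; lra.
by apply: Rplus_le_compat_l; apply: Rmult_le_compat_r; [left; apply: Rinv_0_lt_compat | ].
Qed.

Lemma log2_card2 (B : finType) : #|B| = 2%N -> log2 (INR #|B|) = 1.
Proof.
move=> ->; rewrite /log2 (_ : INR 2 = 2); last by rewrite /=; ring.
by field; have := ln_lt_2; lra.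
Qed.

Section Entropy.
Variables (Om : finType) (p : Om -> R).

Lemma entropyE (A : finType) (f : Om -> A) :
  entropy p f = - rsum (fun w => p w * log2 (dist_of p f (f w))).
Proof.
rewrite /entropy /rsum (partition_big f xpredT) //=; congr Ropp.
apply: eq_bigr => a _; rewrite /dist_of /rsumP big_distrl /=.
by apply: eq_bigr => w /eqP ->.
Qed.

Lemma eq_entropy (A B : finType) (f1 : Om -> A) (f2 : Om -> B) :
  (forall w w', p w <> 0 -> p w' <> 0 -> (f1 w == f1 w') = (f2 w == f2 w')) ->
  entropy p f1 = entropy p f2.
Proof.
move=> same_fibres; rewrite !entropyE /rsum; congr Ropp; apply: eq_bigr => w _.
have [->|pw] := Req_dec (p w) 0; first by ring.
congr (_ * log2 _); rewrite /dist_of !rsumPE /rsum; apply: eq_bigr => w' _.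
have [->|pw'] := Req_dec (p w') 0; first by case: ifP; case: ifP.
by rewrite same_fibres.
Qed.

Lemma cond_mi_injective_source (A B C : finType)
    (fa : Om -> A) (fb : Om -> B) (fc : Om -> C) :
  (forall w w', p w <> 0 -> p w' <> 0 -> fa w = fa w' -> w = w') ->
  cond_mi p fa fb fc = entropy p (fun w => (fb w, fc w)) - entropy p fc.
Proof.
move=> fa_inj; rewrite /cond_mi.
have absorb (D : finType) (f : Om -> D) :
    entropy p (fun w => (fa w, f w)) = entropy p fa.
  apply: eq_entropy => w w' pw pw'; rewrite xpair_eqE.
  by case: eqP => [/(fa_inj _ _ pw pw') -> | _]; rewrite ?eqxx.
have -> : entropy p (fun w => (fa w, fb w, fc w)) =
          entropy p (fun w => (fa w, (fb w, fc w))).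
  by apply: eq_entropy => w w' _ _; rewrite !xpair_eqE andbA.
rewrite !absorb; ring.
Qed.

Hypothesis p_ge0 : forall w, 0 <= p w.

Lemma dist_of_ge (A : finType) (f : Om -> A) w : p w <= dist_of p f (f w).
Proof.
rewrite /dist_of rsumPE.
have {1}-> : p w = (fun w' => if f w' == f w then p w' else 0) w by rewrite eqxx.
by apply: rsum_ge_term => t; case: ifP => _; [apply: p_ge0 | lra].
Qed.

Lemma dist_of_pair_le (A B : finType) (fa : Om -> A) (fb : Om -> B) w :
  dist_of p (fun w => (fa w, fb w)) (fa w, fb w) <= dist_of p fb (fb w).
Proof.
rewrite /dist_of !rsumPE; apply: rsum_le => t; rewrite xpair_eqE.
by case: (fa t == fa w); case: (fb t == fb w) => /=; lra || apply: p_ge0.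
Qed.

Lemma fibre_sum_div_le1 (K : finType) (g : Om -> K) (k : K) :
  rsum (fun w => if g w == k then p w / dist_of p g (g w) else 0) <= 1.
Proof.
have -> : rsum (fun w => if g w == k then p w / dist_of p g (g w) else 0) =
          / dist_of p g k * rsum (fun w => if g w == k then p w else 0).
  by rewrite -rsumMl /rsum; apply: eq_bigr => w _; case: eqP => [->|_]; rewrite /Rdiv; ring.
rewrite -rsumPE -/(dist_of p g k).
have [->|nz] := Req_dec (dist_of p g k) 0; first by rewrite Rmult_0_r; lra.
by rewrite Rinv_l //; lra.
Qed.

Lemma fibre_sum_split (B C : finType) (fb : Om -> B) (fc : Om -> C) c (F : Om -> R) :
  rsum (fun w => if fc w == c then F w else 0) =
  \big[Rplus/R0]_(b : B) rsum (fun w => if (fb w, fc w) == (b, c) then F w else 0).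
Proof.
rewrite /rsum exchange_big /=; apply: eq_bigr => w _.
rewrite (bigD1 (fb w)) //= xpair_eqE eqxx big1 ?Rplus_0_r // => b.
by rewrite xpair_eqE eq_sym => /negbTE ->.
Qed.

Lemma fibre_ratio_sum_le (B C : finType) (fb : Om -> B) (fc : Om -> C) :
  rsum (fun w => p w * (dist_of p fc (fc w) / dist_of p (fun w => (fb w, fc w)) (fb w, fc w)))
  <= INR #|B| * rsum p.
Proof.
set g := fun w => (fb w, fc w).
set F := fun w => p w / dist_of p g (g w).
have -> : rsum (fun w => p w * (dist_of p fc (fc w) / dist_of p g (g w))) =
    rsum (fun w' => p w' * rsum (fun w => if fc w == fc w' then F w else 0)).
  transitivity (rsum (fun w => rsum (fun w' => F w * (if fc w' == fc w then p w' else 0)))).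
    apply: eq_bigr => w _; rewrite rsumMl /F [dist_of p fc _]/dist_of rsumPE /Rdiv; ring.
  rewrite /rsum exchange_big /=; apply: eq_bigr => w' _.
  by rewrite big_distrr /=; apply: eq_bigr => w _; rewrite eq_sym; case: ifP => _; ring.
rewrite [X in _ <= X]Rmult_comm -rsumMr; apply: rsum_le => w'.
apply: Rmult_le_compat_l; first exact: p_ge0.
rewrite (fibre_sum_split fb) -rsumP1.
by apply: (big_ind2 Rle) => [|*|b _]; [lra | lra | apply: fibre_sum_div_le1].
Qed.

(* Gibbs: [ln r <= r - 1] at [r = p(c) / (|B| p(b, c))], whose [p]-average is
   at most 1 by [fibre_ratio_sum_le]. *)
Lemma cond_entropy_le_log_card (B C : finType) (fb : Om -> B) (fc : Om -> C) :
  entropy p (fun w => (fb w, fc w)) - entropy p fc <= log2 (INR #|B|) * rsum p.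
Proof.
have ln2_gt0 : 0 < ln 2 by have := ln_lt_2; lra.
set n := INR #|B|.
set D1 := fun w => dist_of p (fun w => (fb w, fc w)) (fb w, fc w).
set D2 := fun w => dist_of p fc (fc w).
have pointwise w : p w * log2 (D2 w) - p w * log2 (D1 w) <=
    log2 n * p w + (p w * (D2 w / D1 w) * / n - p w) * / ln 2.
  have [->|pw] := Req_dec (p w) 0; first by rewrite /Rdiv; ring_simplify; lra.
  have pw_gt0 : 0 < p w by have := p_ge0 w; lra.
  have D1_gt0 : 0 < D1 w by apply: Rlt_le_trans (dist_of_ge (fun w => (fb w, fc w)) w).
  have D2_gt0 : 0 < D2 w by apply: Rlt_le_trans (dist_of_pair_le fb fc w).
  have n_gt0 : 0 < n by apply: lt_0_INR; apply/leP/card_gt0P; exists (fb w).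
  rewrite -Rmult_minus_distr_l.
  apply: Rle_trans (Rmult_le_compat_l _ _ _ (Rlt_le _ _ pw_gt0) (log2_diff_le n_gt0 D1_gt0 D2_gt0)) _.
  by right; field; lra.
set S := rsum (fun w => p w * (D2 w / D1 w)).
suff slack : (S * / n - rsum p) * / ln 2 <= 0.
  have := rsum_le pointwise; rewrite rsumB rsumD rsumMl rsumMr rsumB rsumMr -/S.
  rewrite !entropyE /D1 /D2 /=; lra.
rewrite -(Rmult_0_l (/ ln 2)); apply: Rmult_le_compat_r; first by left; apply: Rinv_0_lt_compat.
suff : S * / n <= rsum p by lra.
have [n0|n_gt0] : n = 0 \/ 0 < n by have := pos_INR #|B|; rewrite -/n; lra.
- by rewrite n0 Rinv_0 Rmult_0_r; apply: rsum_ge0.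
- apply: (Rmult_le_reg_r n) => //; rewrite Rmult_assoc Rinv_l; last lra.
  by rewrite Rmult_1_r Rmult_comm; apply: fibre_ratio_sum_le.
Qed.

End Entropy.

(* Qualified names: unqualified [prev] and [next] are the sequence functions of path.v. *)
Section Cycle.
Variable m : nat.

Lemma prev_next (i : 'I_m) : Defs.prev (Defs.next i) = i.
Proof.
apply: val_inj; rewrite /= modnDml -addnA subnKC ?(ord_pos i) //.
by rewrite modnDr modn_small.
Qed.

Lemma next_inj : injective (@Defs.next m).
Proof. exact: can_inj prev_next. Qed.

Lemma next_neq (i : 'I_m) : (1 < m)%N -> Defs.next i != i.
Proof.
move=> m_gt1; apply/eqP => /(congr1 val) /=.
have [lt_im|ge_im] := ltnP (i + 1) m; first by rewrite modn_small // addn1 => /eqP; rewrite gtn_eqF.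
have -> : (i + 1 = m)%N by apply/eqP; rewrite eqn_leq ge_im addn1 ltn_ord.
by rewrite modnn => i0; move: ge_im; rewrite -i0 add0n leqNgt m_gt1.
Qed.

End Cycle.

Definition adjacent (m : nat) (a b : 'I_m) := (b == Defs.prev a) || (b == Defs.next a).

Definition fresh (m : nat) (s : {perm 'I_m}) : {set 'I_m} :=
  [set k : 'I_m | [forall j : 'I_m, (j < k)%N ==> ~~ adjacent (s j) (s k)]].

Lemma card_fresh (m : nat) (s : {perm 'I_m}) : (1 < m)%N -> (2 * #|fresh s| <= m)%N.
Proof.
move=> m_gt1; pose f k := (s^-1)%g (Defs.next (s k)).
have sf k : s (f k) = Defs.next (s k) by rewrite /f permKV.
have f_inj : injective f by move=> a b /(congr1 s); rewrite !sf => /next_inj /perm_inj.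
have f_stale : f @: fresh s \subset ~: fresh s.
  apply/subsetP => _ /imsetP [k k_fresh ->]; rewrite !inE in k_fresh *.
  case: (ltngtP (f k) k) => [fk_lt|k_lt|/val_inj fkk].
  - by move/forallP/(_ (f k)): k_fresh; rewrite fk_lt /adjacent sf prev_next eqxx.
  - by rewrite negb_forall; apply/existsP; exists k; rewrite k_lt /adjacent sf eqxx orbT.
  - by move: (next_neq (s k) m_gt1); rewrite -sf fkk eqxx.
have := subset_leq_card f_stale; rewrite card_imset // => le.
by rewrite mul2n -addnn -[X in (_ <= X)%N](card_ord m) -(cardsC (fresh s)) leq_add2l.
Qed.

Lemma card_fresh_odd (m : nat) (s : {perm 'I_m}) :
  (1 < m)%N -> odd m -> (2 * #|fresh s| < m)%N.
Proof.
move=> m_gt1 m_odd; rewrite ltn_neqAle card_fresh // andbT.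
by apply: contraTneq m_odd => <-; rewrite oddM.
Qed.

Definition side_info (m : nat) (x : Xs m) : Ys m :=
  [ffun i => (x (Defs.prev i), x (Defs.next i))].

Definition copy_channel (m : nat) (x : Xs m) (vu : unit * Us m bool) : R :=
  if vu.2 == x then 1 else 0.

Section CopyChannel.
Variables (m : nat) (P : Xs m * Ys m -> R).
Hypothesis P_Pbar : in_Pbar P.

Local Notation p := (joint P (@copy_channel m)).

Lemma Pbar_ge0 xy : 0 <= P xy.
Proof. by case: P_Pbar => [[]]. Qed.

Lemma Pbar_support x y : P (x, y) <> 0 -> y = side_info x.
Proof.
move=> Pxy_neq0; apply/ffunP => i; rewrite ffunE.
case: (y i =P (x (Defs.prev i), x (Defs.next i))) => // y_neq; exfalso.
case: P_Pbar => _ /(_ i x (y i)); rewrite (introF eqP y_neq) rsumPE => marg0.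
have := @rsum_ge_term _ (fun t : Xs m * Ys m => if (t.1 == x) && (t.2 i == y i) then P t else 0) (x, y).
rewrite /= !eqxx marg0 => le0.
have := Pbar_ge0 (x, y); suff : P (x, y) <= 0 by lra.
by apply: le0 => t; case: ifP => _; [apply: Pbar_ge0 | lra].
Qed.

Lemma copy_channel_pmf x : is_pmf (@copy_channel m x).
Proof.
split=> [vu|]; first by rewrite /copy_channel; case: ifP => _; lra.
rewrite /rsum -(pair_big xpredT xpredT (fun v u => copy_channel x (v, u))) /=.
rewrite (eq_bigr (fun _ => 1)) => [|v _]; first by rewrite big_const card_unit /=; ring.
by rewrite (bigD1 x) //= /copy_channel eqxx big1 ?Rplus_0_r // => u /negbTE ->.
Qed.

Lemma copy_joint_ge0 w : 0 <= p w.
Proof.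
apply: Rmult_le_pos; first exact: Pbar_ge0.
by case: (copy_channel_pmf w.1.1) => /(_ w.2).
Qed.

Lemma copy_joint_sum : rsum p = 1.
Proof.
case: P_Pbar => -[_ <-] _.
rewrite /rsum /joint -(pair_big xpredT xpredT (fun a b => P a * copy_channel a.1 b)) /=.
apply: eq_bigr => xy _; rewrite -big_distrr /= -/(rsum _).
by case: (copy_channel_pmf xy.1) => _ ->; rewrite Rmult_1_r.
Qed.

Lemma copy_joint_support w : p w <> 0 -> w.1.2 = side_info w.1.1 /\ w.2.2 = w.1.1.
Proof.
case: w => [[x y] [v u]]; rewrite /joint /copy_channel /= => pw_neq0; split.
  by apply: Pbar_support => Pxy0; apply: pw_neq0; rewrite Pxy0 Rmult_0_l.
by case: eqP pw_neq0 => // _; rewrite Rmult_0_r.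
Qed.

Lemma copy_joint_source_inj w w' : p w <> 0 -> p w' <> 0 -> w.1.1 = w'.1.1 -> w = w'.
Proof.
move=> /copy_joint_support [] + + /copy_joint_support [].
by case: w => [[x y] [[] u]]; case: w' => [[x' y'] [[] u']] /= -> -> -> -> ->.
Qed.

Lemma copy_channel_Cbar eps : 0 <= eps ->
  in_Cbar P eps (@copy_channel m) (fun _ _ u _ => u).
Proof.
move=> eps_ge0; split=> [|i]; first exact: copy_channel_pmf.
rewrite /rsum big1 => [|w _]; first lra.
have [->|/copy_joint_support [_ ->]] := Req_dec (p w) 0; first exact: Rmult_0_l.
by rewrite eqxx Rmult_0_r.
Qed.

Lemma Rlb_term_copy_le1 (s : {perm 'I_m}) (k : 'I_m) :
  Rlb_term P (@copy_channel m) s k <= 1.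
Proof.
rewrite /Rlb_term; case: ifP => _;
  rewrite cond_mi_injective_source; try exact: copy_joint_source_inj;
  apply: Rle_trans (cond_entropy_le_log_card copy_joint_ge0 _ _) _;
  rewrite copy_joint_sum log2_card2 ?card_prod ?card_unit ?card_bool //; lra.
Qed.

Lemma Rlb_term_copy_stale (s : {perm 'I_m}) (k : 'I_m) :
  k \notin fresh s -> Rlb_term P (@copy_channel m) s k = 0.
Proof.
rewrite inE negb_forall => /existsP [j]; rewrite negb_imply negbK => /andP [jk adj_jk].
rewrite /Rlb_term; case: ifP => [/eqP k0|_]; first by rewrite k0 in jk.
rewrite cond_mi_injective_source; last exact: copy_joint_source_inj.
set fc := fun w : Omega m unit bool => (_, _, _).
suff -> : entropy p (fun w => (w.2.2 (s k), fc w)) = entropy p fc by ring.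
apply: eq_entropy => w w' pw pw'; rewrite xpair_eqE.
case fcE: (fc w == fc w'); rewrite ?andbF ?andbT //.
have := congr1 (fun c : unit * Us m (option bool) * Us m (option (bool * bool)) => c.2 j) (eqP fcE).
rewrite /fc /= !ffunE (ltnW jk) => -[].
case/copy_joint_support: pw => -> ->; case/copy_joint_support: pw' => -> ->.
by rewrite !ffunE => -[? ?]; apply/eqP; case/orP: adj_jk => /eqP ->.
Qed.

Lemma Rbar_lb_copy_le : (1 < m)%N -> odd m ->
  Rbar_lb P (@copy_channel m) <= (INR m - 1) / 2.
Proof.
move=> m_gt1 m_odd; apply: (big_ind (Rle^~ _)) => [|x y|s _].
- by have := le_INR 1 m (leP (ltnW m_gt1)); rewrite /=; lra.
- exact: Rmax_lub.
apply: (Rle_trans _ (rsum (fun k => if k \in fresh s then 1 else 0))).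
  apply: rsum_le => k; case: ifPn => [_|k_stale]; first exact: Rlb_term_copy_le1.
  by rewrite Rlb_term_copy_stale //; lra.
rewrite -rsumPE rsumP1; change (INR #|fresh s| <= (INR m - 1) / 2).
have := le_INR _ _ (leP (card_fresh_odd s m_gt1 m_odd)).
by rewrite S_INR mult_INR /=; lra.
Qed.

End CopyChannel.

Theorem lemma3 (m : nat) (Hm : (5 <= m)%N) (Hodd : odd m) :
  exists c : R, (c < INR m / 2) /\
  exists eps0 : R, (0 < eps0) /\
  forall eps : R, (0 < eps < eps0) -> Rlb_le m eps c.
Proof.
have m_gt1 : (1 < m)%N by apply: leq_trans Hm.
exists ((INR m - 1) / 2); split; first lra.
exists 1; split=> [|eps [eps_gt0 _] P P_Pbar eta eta_gt0]; first lra.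
exists unit, bool, (@copy_channel m), (fun _ _ u _ => u); split.
  by apply: (copy_channel_Cbar P_Pbar); lra.
by apply: Rle_trans (Rplus_le_compat_r (- eps) _ _ (Rbar_lb_copy_le P_Pbar m_gt1 Hodd)) _; lra.
Qed.
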